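(* Let $\mathcal{F}$ be a $3$-uniform linear family with $S_{\mathcal{F}}=\emptyset$, let $\mathcal{M}$ be a maximum matching of $\mathcal{F}$, and let $\mathcal{M}_1=\{A_1,\ldots,A_m\}$, $\mathcal{M}_2$, $x_1,\ldots,x_m$ and $\mathcal{E}_2$ be as defined below. Then $\mathcal{E}_2=\emptyset$.
   Context: A family is a finite collection of distinct subsets of a vertex set; $3$-uniform means every member has exactly $3$ elements and linear means any two distinct members share at most one vertex. A matching is a collection of pairwise disjoint members; a maximum matching is one of largest size. $S_{\mathcal{F}}$ is the set of vertices covered by every maximum matching of $\mathcal{F}$. $\mathcal{F}_x=\{E\in\mathcal{F}:x\in E\}$; for a subfamily $\mathcal{N}$, $X_{\mathcal{N}}=\bigcup_{E\in\mathcal{N}}E$. $D_1(\mathcal{F})=\{E\in\mathcal{F}:|E\cap X_{\mathcal{M}}|=1\}$; for $A\in\mathcal{M}$, $D_1(A)=\{E\in D_1(\mathcal{F}):E\cap A\neq\emptyset\}$ and $d_1(A)=|D_1(A)|$. Let $\mathcal{M}_1=\{A\in\mathcal{M}: d_1(A)\geq 7\}=\{A_1,\ldots,A_m\}$ and $\mathcal{M}_2=\mathcal{M}\setminus\mathcal{M}_1$. For each $A_i\in\mathcal{M}_1$ all edges of $D_1(A_i)$ contain a common vertex of $A_i$ (such a vertex exists and is unique); call it $x_i$. Define $\mathcal{E}_1=\bigcup_{i=1}^m\mathcal{F}_{x_i}$ and $\mathcal{E}_2=\{E\in\mathcal{F}: E\cap B=\emptyset\text{ for all }B\in\mathcal{M}_2\}\setminus\mathcal{E}_1$.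 *)

From mathcomp Require Import all_boot.
Set Implicit Arguments. Unset Strict Implicit. Unset Printing Implicit Defensive.

Section Defs.
Variable T : finType.
Implicit Types (F M N : {set {set T}}) (A B E : {set T}) (x : T).

Definition uniform3 F := forall E, E \in F -> #|E| = 3.
Definition linear_family F :=
  forall E E', E \in F -> E' \in F -> E != E' -> #|E :&: E'| <= 1.

Definition matching F M :=
  M \subset F /\ (forall A B, A \in M -> B \in M -> A != B -> [disjoint A & B]).
Definition max_matching F M :=
  matching F M /\ (forall N, matching F N -> #|N| <= #|M|).

Definition XN N : {set T} := \bigcup_(E in N) E.

Definition in_S_F F (v : T) : Prop := forall M, max_matching F M -> v \in XN M.
Definition S_F_empty F : Prop := forall v, ~ in_S_F F v.

Definition F_at F x : {set {set T}} := [set E in F | x \in E].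

Definition D1 F M : {set {set T}} := [set E in F | #|E :&: XN M| == 1].
Definition D1A F M A : {set {set T}} := [set E in D1 F M | E :&: A != set0].
Definition d1 F M A := #|D1A F M A|.

Definition M1 F M : {set {set T}} := [set A in M | 7 <= d1 F M A].
Definition M2 F M : {set {set T}} := M :\: M1 F M.

(* the common vertices in A of all edges of D1(A); for A in M1 this is the
   singleton {x_A} of the paper *)
Definition common_vtx F M A : {set T} :=
  [set x in A | [forall E in D1A F M A, x \in E]].

Definition E1 F M : {set {set T}} :=
  \bigcup_(A in M1 F M) \bigcup_(x in common_vtx F M A) F_at F x.

Definition E2 F M : {set {set T}} :=
  [set E in F | [forall B in M2 F M, [disjoint E & B]]] :\: E1 F M.
End Defs.

From mathcomp Require Import all_boot zify.
Set Implicit Arguments. Unset Strict Implicit. Unset Printing Implicit Defensive.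

(* Suppose E lies in E_2, and let Q be the set of members of M that E meets;
   Q is contained in M_1 and E avoids the vertex x_A of each A in Q.
   An edge of D_1(A) through x_A meets X_M only in x_A, and by linearity any
   vertex y <> x_A lies on at most one such edge.  The vertices outside X_M
   already used by E and by the edges chosen so far number at most
   (3 - |Q|) + 2 (|Q| - 1) <= 6, so they block at most 6 of the >= 7 edges
   of D_1(A), and one can greedily pick pairwise disjoint edges D_A in
   D_1(A), A in Q, all disjoint from E.  Replacing Q by {E} together with these D_A yields a matching
   larger than M. *)

Section FinsetFacts.
Variable T : finType.
Implicit Types (A B : {set T}).

Lemma disjointP A B :
  reflect (forall v, v \in A -> v \in B -> False) [disjoint A & B].
Proof.
apply: (iffP idP) => [AB v vA|H]; first by rewrite (disjointFr AB vA).
rewrite -setI_eq0; apply/set0Pn => -[v]; rewrite inE => /andP[]; exact: H.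
Qed.

Lemma card_bigcup_le (I : finType) (P : {set I}) (G : I -> {set T}) :
  #|\bigcup_(i in P) G i| <= \sum_(i in P) #|G i|.
Proof.
apply: (big_ind2 (fun (U : {set T}) n => #|U| <= n)) => [|U1 n1 U2 n2 h1 h2|//].
  by rewrite cards0.
by apply: leq_trans (leq_card_setU U1 U2) _; exact: leq_add.
Qed.

End FinsetFacts.

Lemma card_le_hitting (T : finType) (S : {set {set T}}) (Y : {set T}) :
  (forall D, D \in S -> exists2 y, y \in Y & y \in D) ->
  (forall y, y \in Y -> #|[set D in S | y \in D]| <= 1) ->
  #|S| <= #|Y|.
Proof.
move=> hit once.
have cover : S \subset \bigcup_(y in Y) [set D in S | y \in D].
  apply/subsetP=> D DS; have [y yY yD] := hit D DS.
  by apply/bigcupP; exists y => //; rewrite inE DS.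
apply: leq_trans (subset_leq_card cover) _.
apply: (leq_trans (card_bigcup_le _ _)).
rewrite -sum1_card; exact: leq_sum.
Qed.

Section LinearFamily.
Variables (T : finType) (F : {set {set T}}).
Hypothesis Flin : linear_family F.

Lemma linear_eq_of_two_common D D' x y : D \in F -> D' \in F ->
  x \in D -> y \in D -> x \in D' -> y \in D' -> x != y -> D = D'.
Proof.
move=> DF D'F xD yD xD' yD' xy; apply/eqP; apply: contraT => DD'.
have sub : [set x; y] \subset D :&: D'.
  by apply/subsetP=> v; rewrite !inE => /orP[]/eqP->; apply/andP.
by have := leq_trans (subset_leq_card sub) (Flin DF D'F DD'); rewrite cards2 xy.
Qed.

(* By linearity, a vertex other than the centre a lies on at most one member
   of the star S. *)
Lemma card_star_le_hitting (S : {set {set T}}) (Y : {set T}) a :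
  S \subset F -> (forall D, D \in S -> a \in D) -> a \notin Y ->
  (forall D, D \in S -> exists2 y, y \in Y & y \in D) -> #|S| <= #|Y|.
Proof.
move=> SF star aY hit; apply: card_le_hitting => // y yY.
apply/card_le1_eqP=> D D'; rewrite !inE => /andP[DS yD] /andP[D'S yD'].
apply: (linear_eq_of_two_common (x := a) (y := y)) => //;
  [exact: (subsetP SF) | exact: (subsetP SF) | exact: star | exact: star |].
by apply: contraNneq aY => ->.
Qed.

End LinearFamily.

Section MaximumMatching.
Variables (T : finType) (F M : {set {set T}}).
Hypotheses (F3 : uniform3 F) (Flin : linear_family F) (Mmax : max_matching F M).
Implicit Types (A B D E W Y : {set T}) (N Q Ds : {set {set T}}).

Lemma matching_set0 : matching F set0.
Proof. by split=> [|A B]; rewrite ?sub0set ?inE. Qed.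

Lemma matching_setU1 N E : matching F N -> E \in F ->
  (forall D, D \in N -> [disjoint D & E]) -> matching F (E |: N).
Proof.
move=> [NF Ndisj] EF DE; split.
  by apply/subsetP=> X; rewrite !inE => /orP[/eqP->|/(subsetP NF)].
move=> A B; rewrite !inE => /orP[/eqP->|AN] /orP[/eqP->|BN] AB.
- by rewrite eqxx in AB.
- by rewrite disjoint_sym; exact: DE.
- exact: DE.
- exact: Ndisj.
Qed.

Lemma matching_set1 E : E \in F -> matching F [set E].
Proof.
move=> EF; rewrite -[[set E]]setU0; apply: matching_setU1 => //.
  exact: matching_set0.
by move=> D; rewrite inE.
Qed.

Lemma max_matching_sub : M \subset F.
Proof. by case: Mmax => -[]. Qed.

Lemma max_matching_disj A B : A \in M -> B \in M -> A != B -> [disjoint A & B].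
Proof. by case: Mmax => -[_ disjM] _; exact: disjM. Qed.

Lemma max_matching_eq A B v : A \in M -> B \in M -> v \in A -> v \in B -> A = B.
Proof.
move=> AM BM vA vB; apply/eqP; apply: contraT => AB.
by move/disjointP: (max_matching_disj AM BM AB) => /(_ v vA vB).
Qed.

Lemma mem_XN N A v : A \in N -> v \in A -> v \in XN N.
Proof. by move=> AN vA; apply/bigcupP; exists A. Qed.

Lemma uniform3_not_disjoint_self D : D \in F -> ~~ [disjoint D & D].
Proof.
move=> DF; have /card_gt0P[v vD] : 0 < #|D| by rewrite F3.
by apply/negP=> /disjointP/(_ v vD vD).
Qed.

Lemma max_matching_exchange Q N : Q \subset M -> matching F N ->
  (forall D B, D \in N -> B \in M :\: Q -> [disjoint D & B]) -> #|N| <= #|Q|.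
Proof.
move=> QM [NF Ndisj] NMQ.
have MQN : [disjoint M :\: Q & N].
  apply/disjointP=> X XMQ XN.
  by have := uniform3_not_disjoint_self (subsetP NF _ XN); rewrite NMQ.
have : matching F ((M :\: Q) :|: N).
  split=> [|A B].
    by rewrite subUset (subset_trans (subsetDl _ _) max_matching_sub).
  rewrite !inE => /orP[/andP[AQ AM]|AN] /orP[/andP[BQ BM]|BN] AB.
  - exact: max_matching_disj.
  - by rewrite disjoint_sym; apply: NMQ; rewrite ?inE ?AQ.
  - by apply: NMQ; rewrite ?inE ?BQ.
  - exact: Ndisj.
move/(Mmax.2); rewrite cardsU (disjoint_setI0 MQN) cards0 subn0 cardsD.
by rewrite (setIidPr QM); have := subset_leq_card QM; lia.
Qed.

Lemma D1A_sub A : D1A F M A \subset F.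
Proof. by apply/subsetP=> D; rewrite !inE => /andP[/andP[]]. Qed.

Lemma D1A_meets A D : D \in D1A F M A -> exists2 u, u \in D & u \in A.
Proof.
by rewrite inE => /andP[_ /set0Pn[u]]; rewrite inE => /andP[uD uA]; exists u.
Qed.

Lemma D1A_XN_eq A D u v : D \in D1A F M A -> u \in D -> v \in D ->
  u \in XN M -> v \in XN M -> u = v.
Proof.
rewrite !inE => /andP[/andP[_ /cards1P[w Dw]] _] uD vD uX vX.
have : u \in D :&: XN M by rewrite inE uD uX.
have : v \in D :&: XN M by rewrite inE vD vX.
by rewrite Dw !inE => /eqP-> /eqP->.
Qed.

Lemma D1A_XN A D v : A \in M -> D \in D1A F M A -> v \in D -> v \in XN M ->
  v \in A.
Proof.
move=> AM DA vD vX; have [u uD uA] := D1A_meets DA.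
by rewrite (D1A_XN_eq DA vD uD vX (mem_XN AM uA)).
Qed.

Lemma D1A_D1 A D : D \in D1A F M A -> D \in D1 F M.
Proof. by rewrite inE => /andP[]. Qed.

Lemma card_D1_out D : D \in D1 F M -> #|D :\: XN M| = 2.
Proof. by rewrite inE => /andP[DF /eqP c]; rewrite cardsD c F3. Qed.

Lemma D1A_disjoint A B D : A \in M -> D \in D1A F M A -> B \in M :\: [set A] ->
  [disjoint D & B].
Proof.
move=> AM DA; rewrite !inE => /andP[BA BM]; apply/disjointP=> v vD vB.
have vA := D1A_XN AM DA vD (mem_XN BM vB).
by move: BA; rewrite (max_matching_eq BM AM vB vA) eqxx.
Qed.

Lemma D1A_pairwise_meet A D D' : A \in M -> D \in D1A F M A ->
  D' \in D1A F M A -> D != D' -> ~~ [disjoint D & D'].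
Proof.
move=> AM DA D'A DD'; apply/negP=> disDD'.
suff : #|[set D; D']| <= #|[set A]| by rewrite cards2 DD' cards1.
apply: max_matching_exchange; first by rewrite sub1set.
  apply: matching_setU1; first exact: matching_set1 (subsetP (D1A_sub A) _ D'A).
    exact: (subsetP (D1A_sub A)).
  by move=> X; rewrite inE => /eqP->; rewrite disjoint_sym.
by move=> X B /set2P[]-> BMA; apply: D1A_disjoint BMA.
Qed.

Lemma D1A_star_le2 A a D : A \in M -> a \in A -> D \in D1A F M A -> a \notin D ->
  #|[set D' in D1A F M A | a \in D']| <= 2.
Proof.
move=> AM aA DA aD; rewrite -(card_D1_out (D1A_D1 DA)).
apply: (card_star_le_hitting Flin (a := a)).
- by apply: subset_trans (D1A_sub A); apply/subsetP=> X; rewrite inE => /andP[].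
- by move=> X; rewrite inE => /andP[].
- by rewrite inE (mem_XN AM aA).
move=> X; rewrite inE => /andP[XA aX].
have XD : X != D by apply: contraNneq aD => <-.
have := D1A_pairwise_meet AM XA DA XD; rewrite -setI_eq0 => /set0Pn[y].
rewrite inE => /andP[yX yD]; exists y => //; rewrite inE yD andbT.
apply/negP=> yM; move: aD.
by rewrite -(D1A_XN_eq XA yX aX yM (mem_XN AM aA)) yD.
Qed.

(* Since the members of D_1(A) pairwise meet, a vertex of A lying on three
   of them lies on all; and if every vertex of A lies on at most two, then
   d_1(A) <= 6. *)
Lemma common_vtx_exists A : A \in M -> 7 <= d1 F M A ->
  exists x, x \in common_vtx F M A.
Proof.
move=> AM d1A; pose star a := [set D in D1A F M A | a \in D].
have [[a aA a3]|star_le2] :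
    (exists2 a, a \in A & 2 < #|star a|) \/ (forall a, a \in A -> #|star a| <= 2).
  have [/exists_inP|/exists_inPn star_le2] := boolP [exists a in A, 2 < #|star a|].
    by left.
  by right=> a aA; rewrite leqNgt star_le2.
  exists a; rewrite inE aA; apply/forall_inP=> D DA; apply: contraT => aD.
  by have := D1A_star_le2 AM aA DA aD; rewrite leqNgt a3.
have cover : D1A F M A \subset \bigcup_(a in A) star a.
  apply/subsetP=> D DA; have [u uD uA] := D1A_meets DA.
  by apply/bigcupP; exists u => //; rewrite inE DA.
have := leq_trans (subset_leq_card cover) (card_bigcup_le A star).
have : \sum_(a in A) #|star a| <= \sum_(a in A) 2 by exact: leq_sum.
rewrite sum_nat_const (F3 (subsetP max_matching_sub _ AM)).
by move: d1A; rewrite /d1; lia.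
Qed.

Lemma D1A_avoiding A x Y : x \in common_vtx F M A -> x \notin Y ->
  #|Y| < d1 F M A -> exists2 D, D \in D1A F M A & [disjoint D & Y].
Proof.
rewrite inE => /andP[_ /forall_inP xD1A] xY Yd1.
pose blocked := [set D in D1A F M A | ~~ [disjoint D & Y]].
have : #|blocked| <= #|Y|.
  apply: (card_star_le_hitting Flin (a := x)) => //.
  - by apply: subset_trans (D1A_sub A); apply/subsetP=> X; rewrite inE => /andP[].
  - by move=> X; rewrite inE => /andP[/xD1A].
  move=> X; rewrite inE => /andP[_]; rewrite -setI_eq0 => /set0Pn[y].
  by rewrite inE => /andP[yX yY]; exists y.
have [sub|/subsetPn[D DA]] := boolP (D1A F M A \subset blocked).
  by move/(leq_trans (subset_leq_card sub)); rewrite leqNgt Yd1.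
by rewrite inE DA negbK; exists D.
Qed.

Lemma card_XN_out_le N : N \subset D1 F M ->
  #|XN N :\: XN M| <= 2 * #|N|.
Proof.
move=> ND1; have sub : XN N :\: XN M \subset \bigcup_(D in N) (D :\: XN M).
  apply/subsetP=> v; rewrite inE => /andP[vX /bigcupP[D DN vD]].
  by apply/bigcupP; exists D; rewrite // inE vX.
apply: leq_trans (subset_leq_card sub) _; apply: (leq_trans (card_bigcup_le _ _)).
rewrite mulnC -sum_nat_const; apply: leq_sum => D /(subsetP ND1) DD1.
by rewrite card_D1_out.
Qed.

(* Only x and vertices outside X_M can be shared, and x avoids W and the
   members of Ds. *)
Lemma D1A_extend A x W Ds : A \in M -> x \in common_vtx F M A -> x \notin W ->
  Ds \subset D1 F M -> (forall D', D' \in Ds -> [disjoint D' & A]) ->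
  #|W :\: XN M| + 2 * #|Ds| < d1 F M A ->
  exists D, [/\ D \in D1A F M A, [disjoint D & W]
              & forall D', D' \in Ds -> [disjoint D' & D]].
Proof.
move=> AM xc xW DsD1 DsA bound.
have xX : x \in XN M by apply: mem_XN AM _; move: xc; rewrite inE => /andP[].
pose bad := (W :|: XN Ds) :\: XN M.
have xbad : x \notin bad by rewrite inE xX.
have cbad : #|bad| < d1 F M A.
  have sub : bad \subset (W :\: XN M) :|: (XN Ds :\: XN M).
    by apply/subsetP=> v; rewrite !inE => /andP[-> /orP[]->]; rewrite ?orbT.
  have := leq_trans (subset_leq_card sub) (leq_card_setU _ _).
  by have := card_XN_out_le DsD1; move: bound; lia.
have [D DA Dbad] := D1A_avoiding xc xbad cbad.
have xD : x \in D by move: xc; rewrite inE => /andP[_ /forall_inP]; apply.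
have Dout v : v \in D -> v \notin XN M -> v \in W :|: XN Ds -> False.
  by move=> vD vX vWDs; move/disjointP: Dbad => /(_ v vD); apply; rewrite inE vX.
exists D; split=> // [|D' D'Ds].
  apply/disjointP=> v vD vW; have [vX|vX] := boolP (v \in XN M).
    by move: xW; rewrite -(D1A_XN_eq DA vD xD vX xX) vW.
  by apply: (Dout v) => //; rewrite inE vW.
apply/disjointP=> v vD' vD; have [vX|vX] := boolP (v \in XN M).
  by move/disjointP: (DsA D' D'Ds) => /(_ v vD'); apply; exact: D1A_XN DA vD vX.
by apply: (Dout v) => //; rewrite inE (mem_XN D'Ds vD') orbT.
Qed.

(* Each chosen edge uses 2 vertices outside X_M, so the counting hypothesis
   leaves at most 6 blocking vertices for D1A_extend at every step. *)
Lemma D1_matching_greedy W Q : Q \subset M ->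
  (forall A, A \in Q ->
     7 <= d1 F M A /\ exists2 x, x \in common_vtx F M A & x \notin W) ->
  #|W :\: XN M| + 2 * #|Q| <= 8 ->
  exists Ds, [/\ matching F Ds, #|Ds| = #|Q|,
    Ds \subset \bigcup_(A in Q) D1A F M A & forall D, D \in Ds -> [disjoint D & W]].
Proof.
move: {2}#|Q| (erefl #|Q|) => n; elim: n Q => [|n IH] Q cQ QM QM1 bound.
  exists set0; split; [exact: matching_set0 | by rewrite cards0 | exact: sub0set |].
  by move=> D; rewrite inE.
have /card_gt0P[A AQ] : 0 < #|Q| by rewrite cQ.
have AM : A \in M := subsetP QM _ AQ.
have cQA : #|Q :\ A| = n by move: cQ; rewrite (cardsD1 A) AQ => -[].
have [|||Ds [mDs cDs DsQ DsW]] := IH (Q :\ A) cQA.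
- exact: subset_trans (subsetDl _ _) QM.
- by move=> A' /setD1P[_]; exact: QM1.
- by move: bound; rewrite cQA cQ; lia.
have DsA' D' : D' \in Ds -> exists2 A', A' \in Q :\ A & D' \in D1A F M A'.
  by move=> /(subsetP DsQ)/bigcupP[A' A'Q D'A']; exists A'.
have DsD1 : Ds \subset D1 F M.
  by apply/subsetP=> D' /DsA'[A' _ /D1A_D1].
have DsA D' : D' \in Ds -> [disjoint D' & A].
  move=> /DsA'[A' /setD1P[A'A A'Q] D'A'].
  by apply: (D1A_disjoint (subsetP QM _ A'Q) D'A'); rewrite !inE eq_sym A'A AM.
have [d1A [x xc xW]] := QM1 A AQ.
have [|D [DA DW DsD]] := D1A_extend AM xc xW DsD1 DsA.
  by move: bound d1A; rewrite cDs cQA cQ; lia.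
have DF : D \in F := subsetP (D1A_sub A) _ DA.
have DDs : D \notin Ds.
  by apply/negP=> /DsD; apply/negP; exact: uniform3_not_disjoint_self.
exists (D |: Ds); split.
- exact: matching_setU1.
- by rewrite cardsU1 DDs cDs cQA cQ.
- apply/subsetP=> X /setU1P[->|/DsA'[A' /setD1P[_ A'Q] XA']].
    by apply/bigcupP; exists A.
  by apply/bigcupP; exists A'.
- by move=> X /setU1P[->|/DsW].
Qed.

Lemma card_members_met_le E :
  #|[set A in M | ~~ [disjoint E & A]]| <= #|E :&: XN M|.
Proof.
apply: card_le_hitting.
  move=> A; rewrite inE => /andP[AM]; rewrite -setI_eq0 => /set0Pn[y].
  by rewrite inE => /andP[yE yA]; exists y; rewrite // inE yE (mem_XN AM yA).
move=> y _; apply/card_le1_eqP=> A A'; rewrite !inE.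
by move=> /andP[/andP[AM _] yA] /andP[/andP[A'M _] yA']; exact: max_matching_eq yA' yA.
Qed.

Lemma E2_met_member E A : E \in E2 F M -> A \in M -> ~~ [disjoint E & A] ->
  7 <= d1 F M A /\ exists2 x, x \in common_vtx F M A & x \notin E.
Proof.
rewrite !inE => /andP[notE1 /andP[EF /forall_inP EM2]] AM EA.
have AM1 : A \in M1 F M.
  by apply: contraT => AM2; move: EA; rewrite EM2 // inE AM2 AM.
have d1A : 7 <= d1 F M A by move: AM1; rewrite inE => /andP[].
have [x xA] := common_vtx_exists AM d1A; split=> //; exists x => //.
apply: contraNN notE1 => xE; apply/bigcupP; exists A => //.
by apply/bigcupP; exists x => //; rewrite inE EF.
Qed.

End MaximumMatching.

Theorem proposition7 (T : finType) (F M : {set {set T}}) :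
  uniform3 F -> linear_family F -> S_F_empty F -> max_matching F M ->
  E2 F M = set0.
Proof.
move=> F3 Flin _ Mmax; apply/setP=> E; rewrite in_set0; apply/negP => E2E.
have EF : E \in F by move: E2E; rewrite !inE => /and3P[].
pose Q := [set A in M | ~~ [disjoint E & A]].
have QM : Q \subset M by apply/subsetP=> A; rewrite inE => /andP[].
have QM1 A : A \in Q ->
    7 <= d1 F M A /\ exists2 x, x \in common_vtx F M A & x \notin E.
  by rewrite inE => /andP[]; exact: E2_met_member.
have bound : #|E :\: XN M| + 2 * #|Q| <= 8.
  have := card_members_met_le Mmax E; rewrite -/Q.
  by have := cardsID (XN M) E; rewrite (F3 E EF); lia.
have [Ds [mDs cDs DsQ DsE]] := D1_matching_greedy F3 Flin Mmax QM QM1 bound.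
have EDs : E \notin Ds.
  by apply/negP=> /DsE; apply/negP; exact: (uniform3_not_disjoint_self F3 EF).
suff : #|E |: Ds| <= #|Q| by rewrite cardsU1 EDs cDs ltnn.
apply: (max_matching_exchange F3 Mmax QM (matching_setU1 mDs EF DsE)).
move=> D B /setU1P[->|DDs] /setDP[BM BQ].
  by move: BQ; rewrite inE BM negbK.
have /bigcupP[A AQ DA] := subsetP DsQ _ DDs.
apply: (D1A_disjoint Mmax (subsetP QM _ AQ) DA); rewrite !inE BM andbT.
by apply: contraNneq BQ => ->.
Qed.
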